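(* Let $(X_j)_{j\in\mathbb{Z}^2}$ be i.i.d. Poisson random variables with mean $\lambda>0$ and let $N_n$ be the greedy lattice animal weight of size $n$. Then for every $k\in\mathbb{N}$ there is $C<\infty$ (depending on $k,\lambda$) such that $\mathbb{E}N_n^k\le Cn^k$ for all $n\in\mathbb{N}$.
   Context: A lattice animal is a connected subset of $\mathbb{Z}^2$ containing the origin; $A(n)$ is the set of lattice animals with $n$ sites; $N_n=\max_{\mathcal{A}\in A(n)}\sum_{k\in\mathcal{A}}X_k$. *)

From Stdlib Require Import Reals ZArith List Arith ClassicalEpsilon.
Import ListNotations.
Open Scope R_scope.

Definition site := (Z * Z)%type.
Definition origin : site := (0%Z, 0%Z).

Definition adjacent (p q : site) : Prop :=
  (Z.abs (fst p - fst q) + Z.abs (snd p - snd q))%Z = 1%Z.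

Inductive reach (A : list site) : site -> Prop :=
| reach_origin : In origin A -> reach A origin
| reach_step : forall p q, reach A p -> adjacent p q -> In q A -> reach A q.

Definition animal (n : nat) (A : list site) : Prop :=
  NoDup A /\ length A = n /\ In origin A /\ (forall p, In p A -> reach A p).

Definition config := site -> nat.

Definition weight (x : config) (A : list site) : nat :=
  fold_right (fun p acc => (x p + acc)%nat) 0%nat A.

Definition is_greedy (n : nat) (x : config) (v : nat) : Prop :=
  (exists A, animal n A /\ weight x A = v) /\
  (forall A, animal n A -> (weight x A <= v)%nat).

(* N_n as a function of the configuration (well defined for n >= 1,
   since the maximum over the finite nonempty set A(n) exists). *)
Definition N (n : nat) (x : config) : nat :=
  epsilon (inhabits 0%nat) (fun v => is_greedy n x v).

Definition poisson_pmf (lam : R) (v : nat) : R :=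
  exp (- lam) * lam ^ v / INR (fact v).

(* the box [-n,n]^2, which contains every animal of size n *)
Definition box (n : nat) : list site :=
  flat_map (fun i => map (fun j => (Z.of_nat i - Z.of_nat n, Z.of_nat j - Z.of_nat n)%Z)
                          (seq 0 (2 * n + 1)))
           (seq 0 (2 * n + 1)).

Definition update (x : config) (s : site) (v : nat) : config :=
  fun p => if (Z.eqb (fst p) (fst s) && Z.eqb (snd p) (snd s))%bool then v else x p.

Fixpoint sum_range (M : nat) (f : nat -> R) : R :=
  match M with
  | O => f O
  | S m => sum_range m f + f (S m)
  end.

(* sum over all assignments of values in {0..M} to the given sites (other
   sites keep their value in x0) of  prod Poisson(lam) weights * F config. *)
Fixpoint trunc_sum (lam : R) (M : nat) (sites : list site)
         (F : config -> R) (x0 : config) : R :=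
  match sites with
  | [] => F x0
  | s :: rest => sum_range M (fun v =>
                   poisson_pmf lam v * trunc_sum lam M rest F (update x0 s v))
  end.

(* Truncated expectation E[ N_n^k ; all X_j <= M for j in the box ].
   Since N_n depends only on (X_j)_{j in box n} and N_n^k >= 0,
   E[N_n^k] = sup_M trunc_moment lam n k M (monotone convergence). *)
Definition trunc_moment (lam : R) (n k M : nat) : R :=
  trunc_sum lam M (box n) (fun x => INR (N n x) ^ k) (fun _ => 0%nat).

From Pilot Require Import Defs.
From Stdlib Require Import Reals List Permutation Arith Lia Lra Classical ClassicalEpsilon.
Import ListNotations.
Open Scope R_scope.

(* Exponential moment and a union bound over walks.  An animal with n sites is the site
   set of a nearest-neighbour walk from the origin with 2n-2 steps (add one boundary site
   at a time, splicing a back-and-forth excursion into the walk), so e^{N_n} is at most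
   the sum of e^{X(w)} over the 4^{2n-2} such walks w, where X(w) is the total weight of
   the sites visited by w.  Each X(w) is a sum of at most 2n-1 independent Poisson
   variables, hence E e^{X(w)} <= (E e^{X_0})^{2n-1} = e^{(2n-1) lam (e-1)}, and
   E e^{N_n} <= e^{a n} with a = 4 + 2 lam (e-1).  Finally y^k <= (2an)^k + 2^k k! e^{y-an}
   for y >= 0, so E N_n^k <= (2a)^k n^k + 2^k k!. *)

Lemma exp_partial_sum_le (y : R) (m : nat) : 0 <= y ->
  sum_f_R0 (fun i => / INR (fact i) * y ^ i) m <= exp y.
Proof.
  intros Hy. unfold exp. destruct (exist_exp y) as [l Hl]. simpl.
  apply (growing_ineq (sum_f_R0 (fun i => / INR (fact i) * y ^ i))); [|exact Hl].
  intro i. rewrite tech5.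
  assert (0 <= / INR (fact (S i)) * y ^ S i).
  { apply Rmult_le_pos; [left; apply Rinv_0_lt_compat, lt_0_INR, lt_O_fact | apply pow_le; lra]. }
  lra.
Qed.

Lemma pow_div_fact_le_exp (y : R) (k : nat) : 0 <= y -> y ^ k / INR (fact k) <= exp y.
Proof.
  intros Hy. eapply Rle_trans; [|apply (exp_partial_sum_le y k Hy)].
  assert (Hterm : y ^ k / INR (fact k) = / INR (fact k) * y ^ k) by (unfold Rdiv; ring).
  rewrite Hterm. destruct k as [|k]; [right; reflexivity|]. rewrite tech5.
  assert (0 <= sum_f_R0 (fun i => / INR (fact i) * y ^ i) k).
  { apply cond_pos_sum. intro i. apply Rmult_le_pos;
      [left; apply Rinv_0_lt_compat, lt_0_INR, lt_O_fact | apply pow_le; lra]. }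
  lra.
Qed.

Lemma exp_mult_INR (a : R) (n : nat) : exp (a * INR n) = exp a ^ n.
Proof.
  induction n as [|n IH]; [simpl; rewrite Rmult_0_r, exp_0; reflexivity|].
  rewrite S_INR, Rmult_plus_distr_l, Rmult_1_r, exp_plus, IH. simpl. ring.
Qed.

Lemma sum_range_sum_f_R0 (m : nat) (f : nat -> R) : sum_range m f = sum_f_R0 f m.
Proof. induction m as [|m IH]; simpl; rewrite ?IH; reflexivity. Qed.

Lemma sum_range_ext (m : nat) (f g : nat -> R) :
  (forall v, f v = g v) -> sum_range m f = sum_range m g.
Proof. intros H; induction m as [|m IH]; simpl; rewrite ?IH, ?H; reflexivity. Qed.

Lemma sum_range_le (m : nat) (f g : nat -> R) :
  (forall v, f v <= g v) -> sum_range m f <= sum_range m g.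
Proof. intros H; induction m as [|m IH]; simpl; [|apply Rplus_le_compat]; auto. Qed.

Lemma sum_range_plus (m : nat) (f g : nat -> R) :
  sum_range m (fun v => f v + g v) = sum_range m f + sum_range m g.
Proof. induction m as [|m IH]; simpl; rewrite ?IH; ring. Qed.

Lemma sum_range_scal (m : nat) (c : R) (f : nat -> R) :
  sum_range m (fun v => c * f v) = c * sum_range m f.
Proof. induction m as [|m IH]; simpl; rewrite ?IH; ring. Qed.

Lemma poisson_pmf_ge0 (lam : R) (v : nat) : 0 <= lam -> 0 <= poisson_pmf lam v.
Proof.
  intros Hlam. unfold poisson_pmf, Rdiv.
  apply Rmult_le_pos; [apply Rmult_le_pos; [left; apply exp_pos | apply pow_le; exact Hlam]|].
  left; apply Rinv_0_lt_compat, lt_0_INR, lt_O_fact.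
Qed.

Lemma sum_poisson_pmf_pow_le (lam t : R) (m : nat) : 0 <= lam -> 0 <= t ->
  sum_range m (fun v => poisson_pmf lam v * t ^ v) <= exp (lam * (t - 1)).
Proof.
  intros Hlam Ht. rewrite sum_range_sum_f_R0.
  assert (E : sum_f_R0 (fun v => poisson_pmf lam v * t ^ v) m
              = exp (- lam) * sum_f_R0 (fun i => / INR (fact i) * (lam * t) ^ i) m).
  { rewrite scal_sum. apply sum_eq. intros i _. unfold poisson_pmf.
    rewrite Rpow_mult_distr. field. apply not_0_INR, fact_neq_0. }
  rewrite E. replace (lam * (t - 1)) with (- lam + lam * t) by ring. rewrite exp_plus.
  apply Rmult_le_compat_l; [left; apply exp_pos|].
  apply exp_partial_sum_le, Rmult_le_pos; assumption.
Qed.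

Definition poisson_exp_moment (lam : R) : R := exp (lam * (exp 1 - 1)).

Lemma poisson_exp_moment_ge1 (lam : R) : 0 <= lam -> 1 <= poisson_exp_moment lam.
Proof.
  intros Hlam. unfold poisson_exp_moment.
  pose proof (exp_ineq1_le 1). pose proof (exp_ineq1_le (lam * (exp 1 - 1))). nra.
Qed.

Lemma sum_poisson_pmf_le1 (lam : R) (m : nat) : 0 <= lam -> sum_range m (poisson_pmf lam) <= 1.
Proof.
  intros Hlam. rewrite <- exp_0, <- (Rmult_0_r lam), <- (Rminus_diag 1).
  rewrite (sum_range_ext m _ (fun v => poisson_pmf lam v * 1 ^ v))
    by (intro v; rewrite pow1; ring).
  apply sum_poisson_pmf_pow_le; lra.
Qed.

Lemma sum_poisson_pmf_exp_le (lam : R) (m : nat) : 0 <= lam ->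
  sum_range m (fun v => poisson_pmf lam v * exp (INR v)) <= poisson_exp_moment lam.
Proof.
  intros Hlam.
  rewrite (sum_range_ext m _ (fun v => poisson_pmf lam v * exp 1 ^ v))
    by (intro v; rewrite <- exp_mult_INR, Rmult_1_l; reflexivity).
  unfold poisson_exp_moment. apply sum_poisson_pmf_pow_le; [exact Hlam | left; apply exp_pos].
Qed.

Definition sum_over {A : Type} (l : list A) (h : A -> R) : R :=
  fold_right (fun a acc => h a + acc) 0 l.

Lemma sum_over_ge_term {A : Type} (l : list A) (h : A -> R) (a : A) :
  In a l -> (forall b, 0 <= h b) -> h a <= sum_over l h.
Proof.
  intros Ha Hpos. induction l as [|b l IH]; [contradiction|]. simpl.
  assert (0 <= sum_over l h).
  { clear Ha IH. induction l as [|c l IHl]; simpl; [lra|]. pose proof (Hpos c); lra. }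
  destruct Ha as [<-|Ha]; [lra|]. pose proof (IH Ha); pose proof (Hpos b); lra.
Qed.

Lemma sum_over_le_length {A : Type} (l : list A) (h : A -> R) (B : R) :
  (forall a, In a l -> h a <= B) -> sum_over l h <= INR (length l) * B.
Proof.
  induction l as [|a l IH]; intros H; simpl length; [simpl; lra|].
  rewrite S_INR. simpl sum_over.
  assert (h a <= B) by (apply H; left; reflexivity).
  assert (sum_over l h <= INR (length l) * B) by (apply IH; intros; apply H; right; assumption).
  lra.
Qed.

Section TruncatedSum.
Variables (lam : R) (M : nat).

Lemma trunc_sum_plus (L : list site) (F G : config -> R) (x0 : config) :
  trunc_sum lam M L (fun x => F x + G x) x0
  = trunc_sum lam M L F x0 + trunc_sum lam M L G x0.
Proof.
  revert x0; induction L as [|s L IH]; intros x0; simpl; [reflexivity|].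
  rewrite <- sum_range_plus. apply sum_range_ext; intro v. rewrite IH; ring.
Qed.

Lemma trunc_sum_scal (L : list site) (c : R) (F : config -> R) (x0 : config) :
  trunc_sum lam M L (fun x => c * F x) x0 = c * trunc_sum lam M L F x0.
Proof.
  revert x0; induction L as [|s L IH]; intros x0; simpl; [reflexivity|].
  rewrite <- sum_range_scal. apply sum_range_ext; intro v. rewrite IH; ring.
Qed.

Lemma trunc_sum_sum_over {A : Type} (l : list A) (G : A -> config -> R)
    (L : list site) (x0 : config) :
  trunc_sum lam M L (fun x => sum_over l (fun a => G a x)) x0
  = sum_over l (fun a => trunc_sum lam M L (G a) x0).
Proof.
  induction l as [|a l IH]; simpl.
  - revert x0; induction L as [|s L IH]; intros x0; simpl; [reflexivity|].
    rewrite (sum_range_ext _ _ (fun v => 0 * poisson_pmf lam v)), sum_range_scal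
      by (intro v; rewrite IH; ring).
    ring.
  - rewrite trunc_sum_plus, IH. reflexivity.
Qed.

Hypothesis lam_ge0 : 0 <= lam.

Lemma trunc_sum_le (L : list site) (F G : config -> R) (x0 : config) :
  (forall x, F x <= G x) -> trunc_sum lam M L F x0 <= trunc_sum lam M L G x0.
Proof.
  intros H; revert x0; induction L as [|s L IH]; intros x0; simpl; [apply H|].
  apply sum_range_le; intro v. apply Rmult_le_compat_l; [apply poisson_pmf_ge0|]; auto.
Qed.

Lemma trunc_sum_one_le (L : list site) (x0 : config) :
  trunc_sum lam M L (fun _ => 1) x0 <= 1.
Proof.
  revert x0; induction L as [|s L IH]; intros x0; simpl; [lra|].
  eapply Rle_trans; [|apply (sum_poisson_pmf_le1 lam M lam_ge0)].
  apply sum_range_le; intro v. rewrite <- (Rmult_1_r (poisson_pmf lam v)) at 2.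
  apply Rmult_le_compat_l; [apply poisson_pmf_ge0|]; auto.
Qed.

End TruncatedSum.

Definition site_eq_dec (p q : site) : {p = q} + {p <> q}.
Proof. decide equality; apply Z.eq_dec. Defined.

Definition count_in (L S : list site) : nat :=
  length (filter (fun t => if in_dec site_eq_dec t L then true else false) S).

Lemma count_in_nil (S : list site) : count_in [] S = 0%nat.
Proof. unfold count_in. induction S as [|a S IH]; simpl; auto. Qed.

Lemma count_in_cons (s : site) (L S : list site) : ~ In s L -> NoDup S ->
  count_in (s :: L) S = ((if in_dec site_eq_dec s S then 1 else 0) + count_in L S)%nat.
Proof.
  intros HsL HS; unfold count_in; induction S as [|a S IH]; [reflexivity|].
  inversion HS as [|? ? HaS HS']; subst. cbn [filter].
  destruct (in_dec site_eq_dec a (s :: L)), (in_dec site_eq_dec a L),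
    (in_dec site_eq_dec s (a :: S)), (in_dec site_eq_dec s S);
  cbn [length]; rewrite IH by assumption;
  destruct (in_dec site_eq_dec s S); try contradiction; simpl in *; try lia;
  firstorder (subst; try congruence; try tauto).
Qed.

Lemma update_spec (x : config) (s : site) (v : nat) (p : site) :
  update x s v p = if site_eq_dec p s then v else x p.
Proof.
  destruct p as [a b], s as [c d]; unfold update; cbn [fst snd].
  destruct (site_eq_dec (a, b) (c, d)) as [E|E].
  - injection E as -> ->. rewrite !Z.eqb_refl. reflexivity.
  - destruct (Z.eqb_spec a c), (Z.eqb_spec b d); subst; simpl; congruence.
Qed.

Lemma weight_perm (x : config) (S S' : list site) : Permutation S S' -> weight x S = weight x S'.
Proof. induction 1; simpl; lia. Qed.

Lemma weight_zero (S : list site) : weight (fun _ => 0%nat) S = 0%nat.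
Proof. induction S; simpl; auto. Qed.

Lemma weight_update (x : config) (s : site) (v : nat) (S : list site) :
  x s = 0%nat -> NoDup S ->
  weight (update x s v) S = (weight x S + if in_dec site_eq_dec s S then v else 0)%nat.
Proof.
  intros Hxs; induction S as [|a S IH]; intros HS; simpl; [reflexivity|].
  inversion HS as [|? ? HaS HS']; subst. rewrite IH, update_spec by assumption.
  destruct (site_eq_dec a s) as [->|Has].
  - rewrite Hxs. destruct (in_dec site_eq_dec s S); [contradiction|].
    destruct (site_eq_dec s s); [lia|congruence].
  - destruct (site_eq_dec a s); [contradiction|].
    destruct (in_dec site_eq_dec s S) as [|HsS]; [lia|].
    destruct (in_dec site_eq_dec s (a :: S)) as [[|]|]; [congruence|contradiction|lia].
Qed.

(* Independence: each site of L contributes one Poisson factor to the bound, namely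
   E e^{X} if the site lies in S and 1 otherwise. *)
Lemma trunc_sum_exp_weight_le (lam : R) (M : nat) (L S : list site) (x0 : config) :
  0 <= lam -> NoDup L -> NoDup S -> (forall p, In p L -> x0 p = 0%nat) ->
  trunc_sum lam M L (fun x => exp (INR (weight x S))) x0
  <= poisson_exp_moment lam ^ count_in L S * exp (INR (weight x0 S)).
Proof.
  intros Hlam HL HS. revert x0. induction L as [|s L IH]; intros x0 Hx0.
  { rewrite count_in_nil. simpl. lra. }
  inversion HL as [|? ? HsL HL']; subst. simpl trunc_sum.
  set (C := poisson_exp_moment lam ^ count_in L S * exp (INR (weight x0 S))).
  assert (HC : 0 <= C).
  { apply Rmult_le_pos; [apply pow_le | left; apply exp_pos].
    pose proof (poisson_exp_moment_ge1 lam Hlam); lra. }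
  assert (Hstep : forall v,
    trunc_sum lam M L (fun x => exp (INR (weight x S))) (update x0 s v)
    <= C * exp (INR (if in_dec site_eq_dec s S then v else 0%nat))).
  { intro v. eapply Rle_trans; [apply IH; [assumption|]|].
    - intros p Hp. rewrite update_spec.
      destruct (site_eq_dec p s) as [->|]; [contradiction|]. apply Hx0; right; assumption.
    - rewrite weight_update by (try apply Hx0; auto using in_eq).
      rewrite plus_INR, exp_plus. unfold C. right; ring. }
  eapply Rle_trans.
  { apply sum_range_le; intro v.
    apply Rmult_le_compat_l; [apply poisson_pmf_ge0; assumption | apply Hstep]. }
  rewrite (sum_range_ext _ _
    (fun v => C * (poisson_pmf lam v * exp (INR (if in_dec site_eq_dec s S then v else 0%nat)))))
    by (intro; ring).
  rewrite sum_range_scal, count_in_cons by assumption.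
  destruct (in_dec site_eq_dec s S).
  - apply Rle_trans with (C * poisson_exp_moment lam).
    + apply Rmult_le_compat_l; [assumption | apply sum_poisson_pmf_exp_le; assumption].
    + unfold C. simpl. right; ring.
  - apply Rle_trans with (C * 1).
    + apply Rmult_le_compat_l; [assumption|].
      rewrite (sum_range_ext _ _ (poisson_pmf lam)) by (intro; simpl; rewrite exp_0; ring).
      apply sum_poisson_pmf_le1; assumption.
    + unfold C. simpl. right; ring.
Qed.

Definition dirs : list site := [(1, 0); (-1, 0); (0, 1); (0, -1)]%Z.

Definition shift (p d : site) : site := (fst p + fst d, snd p + snd d)%Z.

Fixpoint walks (L : nat) (p : site) : list (list site) :=
  match L with
  | O => [[p]]
  | S L' => flat_map (fun d => map (cons p) (walks L' (shift p d))) dirs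
  end.

Fixpoint chain (l : list site) : Prop :=
  match l with
  | a :: ((b :: _) as t) => adjacent a b /\ chain t
  | _ => True
  end.

Lemma length_walks (L : nat) (p : site) : length (walks L p) = (4 ^ L)%nat.
Proof.
  revert p; induction L as [|L IH]; intros p; simpl; [reflexivity|].
  rewrite !length_app, !length_map, !IH. simpl. lia.
Qed.

Lemma In_walks_length (L : nat) (p : site) (w : list site) :
  In w (walks L p) -> length w = S L.
Proof.
  revert p w; induction L as [|L IH]; intros p w H; cbn [walks] in H.
  - destruct H as [<-|[]]; reflexivity.
  - apply in_flat_map in H as [d [_ H]]. apply in_map_iff in H as [u [<- H]].
    simpl. f_equal. eapply IH; eassumption.
Qed.

Lemma adjacent_shift (p q : site) : adjacent p q -> exists d, In d dirs /\ q = shift p d.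
Proof.
  destruct p as [a b], q as [c e]; unfold adjacent, shift, dirs; cbn [fst snd]; intros H.
  assert ((c = a + 1 /\ e = b) \/ (c = a - 1 /\ e = b) \/
          (c = a /\ e = b + 1) \/ (c = a /\ e = b - 1))%Z
    as [[-> ->]|[[-> ->]|[[-> ->]|[-> ->]]]] by lia;
  [exists (1, 0)%Z | exists (-1, 0)%Z | exists (0, 1)%Z | exists (0, -1)%Z];
  (split; [simpl; auto 6 | cbn [fst snd]; f_equal; lia]).
Qed.

Lemma chain_In_walks (L : nat) (p : site) (w : list site) :
  chain (p :: w) -> length w = L -> In (p :: w) (walks L p).
Proof.
  revert p w; induction L as [|L IH]; intros p w Hc Hl.
  - destruct w; [left; reflexivity | discriminate].
  - destruct w as [|q w]; [discriminate|].
    destruct Hc as [Hpq Hc]. destruct (adjacent_shift _ _ Hpq) as [d [Hd ->]].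
    cbn [walks]. apply in_flat_map. exists d; split; [assumption|].
    apply in_map, IH; [assumption | injection Hl; auto].
Qed.

Lemma chain_app (l1 l2 : list site) (a : site) :
  chain (l1 ++ a :: l2) <-> chain (l1 ++ [a]) /\ chain (a :: l2).
Proof.
  induction l1 as [|b l1 IH]; simpl; [tauto|].
  destruct l1 as [|c l1]; simpl in *; [tauto|].
  rewrite IH. tauto.
Qed.

Lemma adjacent_sym (p q : site) : adjacent p q -> adjacent q p.
Proof. unfold adjacent; lia. Qed.

Lemma chain_backtrack (l1 l2 : list site) (p q : site) :
  chain (l1 ++ p :: l2) -> adjacent p q -> chain (l1 ++ p :: q :: p :: l2).
Proof.
  intros Hc Hpq. apply chain_app in Hc as [H1 H2]. apply chain_app.
  split; [exact H1|]. split; [exact Hpq|]. split; [apply adjacent_sym, Hpq | exact H2].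
Qed.

Lemma reach_exit (A S : list site) (q : site) : In origin S -> reach A q ->
  In q S \/ exists p q', In p S /\ adjacent p q' /\ In q' A /\ ~ In q' S.
Proof.
  intros HO Hq; induction Hq as [|p q Hp IH Hpq HqA]; [left; assumption|].
  destruct IH as [HpS|Hexit]; [|right; assumption].
  destruct (in_dec site_eq_dec q S); [left; assumption | right; exists p, q; auto].
Qed.

Lemma animal_walk_grow (n : nat) (A S w : list site) : animal n A ->
  chain (origin :: w) -> (forall x, In x (origin :: w) <-> In x S) -> NoDup S ->
  (length S < n)%nat ->
  exists q w', chain (origin :: w') /\ length w' = (length w + 2)%nat /\
    In q A /\ ~ In q S /\ forall x, In x (origin :: w') <-> In x (q :: S).
Proof.
  intros [HA [HAn [HOA Hreach]]] Hc Hw HS HSn.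
  assert (Hnew : exists a, In a A /\ ~ In a S).
  { apply NNPP; intro Hnone.
    assert (incl A S) by (intros a Ha; apply NNPP; eauto).
    pose proof (NoDup_incl_length HA H); lia. }
  destruct Hnew as [a [HaA HaS]].
  destruct (reach_exit A S a (proj1 (Hw origin) (in_eq _ _)) (Hreach a HaA))
    as [|[p [q [HpS [Hpq [HqA HqS]]]]]]; [contradiction|].
  apply Hw, in_split in HpS as [l1 [l2 Hsplit]].
  assert (Hstart : exists w', origin :: w' = l1 ++ p :: q :: p :: l2).
  { destruct l1 as [|b l1]; injection Hsplit as Hhead _; subst; eexists; reflexivity. }
  destruct Hstart as [w' Hw']. exists q, w'.
  split; [|split; [|split; [|split]]]; try assumption.
  - rewrite Hw'. rewrite Hsplit in Hc. apply chain_backtrack; assumption.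
  - apply (f_equal (@length site)) in Hw'. apply (f_equal (@length site)) in Hsplit.
    rewrite length_app in *. simpl in *. lia.
  - intros x. rewrite Hw'. specialize (Hw x). rewrite Hsplit, !in_app_iff in Hw.
    rewrite in_app_iff. simpl in *. intuition congruence.
Qed.

Lemma animal_covering_walk (n : nat) (A : list site) : animal n A ->
  forall j, (1 <= j <= n)%nat ->
  exists w S, chain (origin :: w) /\ length w = (2 * j - 2)%nat /\
    (forall x, In x (origin :: w) <-> In x S) /\ NoDup S /\ length S = j /\ incl S A.
Proof.
  intros HA j Hj. induction j as [|j IH]; [lia|].
  destruct (Nat.eq_dec j 0) as [->|Hj0].
  - exists [], [origin]. destruct HA as [_ [_ [HOA _]]].
    repeat split; try tauto.
    + repeat constructor; auto.
    + intros x [<-|[]]; assumption.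
  - destruct IH as [w [S [Hc [Hlw [Hw [HS [HSj HSA]]]]]]]; [lia|].
    destruct (animal_walk_grow n A S w HA Hc Hw HS ltac:(lia))
      as [q [w' [Hc' [Hlw' [HqA [HqS Hw']]]]]].
    exists w', (q :: S). repeat split; try assumption.
    + lia.
    + apply Hw'.
    + apply Hw'.
    + constructor; assumption.
    + simpl; lia.
    + intros x [<-|Hx]; auto.
Qed.

Lemma animal_walk (n : nat) (A : list site) : (1 <= n)%nat -> animal n A ->
  exists w, In w (walks (2 * n - 2) origin) /\ Permutation (nodup site_eq_dec w) A.
Proof.
  intros Hn HA.
  destruct (animal_covering_walk n A HA n ltac:(lia))
    as [w [S [Hc [Hlw [Hw [HS [HSn HSA]]]]]]].
  destruct HA as [HA [HAn _]].
  assert (HAS : incl A S) by (apply NoDup_length_incl; auto; lia).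
  exists (origin :: w). split; [apply chain_In_walks; assumption|].
  apply NoDup_Permutation; [apply NoDup_nodup | assumption|].
  intros x. rewrite nodup_In, Hw. split; auto.
Qed.

Lemma nat_bounded_has_max (P : nat -> Prop) (B : nat) :
  (exists v, P v) -> (forall v, P v -> (v <= B)%nat) ->
  exists v, P v /\ forall u, P u -> (u <= v)%nat.
Proof.
  revert P; induction B as [|B IH]; intros P [v Hv] Hb.
  - exists v; split; [assumption|]. intros u Hu. pose proof (Hb u Hu); lia.
  - destruct (classic (P (S B))) as [HB|HB]; [exists (S B); split; assumption|].
    apply IH; [exists v; assumption|]. intros u Hu. pose proof (Hb u Hu).
    destruct (Nat.eq_dec u (S B)) as [->|]; [contradiction | lia].
Qed.

Definition segment (n : nat) : list site := map (fun i => (Z.of_nat i, 0%Z)) (seq 0 n).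

Lemma segment_animal (n : nat) : (1 <= n)%nat -> animal n (segment n).
Proof.
  intros Hn.
  assert (Hin : forall i, (i < n)%nat -> In (Z.of_nat i, 0%Z) (segment n))
    by (intros i Hi; apply (in_map (fun i => (Z.of_nat i, 0%Z))), in_seq; lia).
  split; [|split; [|split]].
  - apply NoDup_map_NoDup_ForallPairs; [|apply seq_NoDup].
    intros a b _ _ H. injection H; lia.
  - unfold segment. rewrite length_map, length_seq; reflexivity.
  - apply (Hin 0%nat); lia.
  - intros p Hp. apply in_map_iff in Hp as [i [<- Hi]]. apply in_seq in Hi.
    assert (Hj : forall j, (j < n)%nat -> reach (segment n) (Z.of_nat j, 0%Z)).
    { induction j as [|j IH]; intros Hj; [apply reach_origin, (Hin 0%nat); lia|].
      apply reach_step with (Z.of_nat j, 0%Z); [apply IH; lia | | apply Hin; lia].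
      unfold adjacent; simpl; lia. }
    apply Hj; lia.
Qed.

Lemma is_greedy_N (n : nat) (x : config) : (1 <= n)%nat -> is_greedy n x (Defs.N n x).
Proof.
  intros Hn. unfold Defs.N. apply epsilon_spec.
  set (B := list_max (map (fun w => weight x (nodup site_eq_dec w)) (walks (2 * n - 2) origin))).
  destruct (nat_bounded_has_max (fun v => exists A, animal n A /\ weight x A = v) B)
    as [v [Hv Hmax]].
  - exists (weight x (segment n)), (segment n). split; [apply segment_animal|]; auto.
  - intros v [A [HA <-]]. destruct (animal_walk n A Hn HA) as [w [Hw Hperm]].
    rewrite <- (weight_perm x _ _ Hperm).
    assert (HB : Forall (fun k => (k <= B)%nat)
      (map (fun w => weight x (nodup site_eq_dec w)) (walks (2 * n - 2) origin)))
      by (apply list_max_le; reflexivity).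
    rewrite Forall_map, Forall_forall in HB. apply HB, Hw.
  - exists v. split; [assumption|]. intros A HA. apply Hmax. eauto.
Qed.

Lemma exp_N_le_sum_walks (n : nat) (x : config) : (1 <= n)%nat ->
  exp (INR (Defs.N n x))
  <= sum_over (walks (2 * n - 2) origin) (fun w => exp (INR (weight x (nodup site_eq_dec w)))).
Proof.
  intros Hn. destruct (is_greedy_N n x Hn) as [[A [HA <-]] _].
  destruct (animal_walk n A Hn HA) as [w [Hw Hperm]].
  rewrite <- (weight_perm x _ _ Hperm).
  apply (sum_over_ge_term _ (fun w => exp (INR (weight x (nodup site_eq_dec w))))); [assumption|].
  intros; left; apply exp_pos.
Qed.

Lemma NoDup_flat_map {A B : Type} (f : A -> list B) (l : list A) :
  NoDup l -> (forall a, NoDup (f a)) ->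
  (forall a a' b, In b (f a) -> In b (f a') -> a = a') -> NoDup (flat_map f l).
Proof.
  intros Hl Hf Hdisj. induction l as [|a l IH]; simpl; [constructor|].
  inversion Hl as [|? ? Hal Hl']; subst. apply NoDup_app; auto.
  intros b Hb Hb'. apply in_flat_map in Hb' as [a' [Ha' Hb']].
  rewrite (Hdisj a a' b Hb Hb') in Hal. contradiction.
Qed.

Lemma box_NoDup (n : nat) : NoDup (box n).
Proof.
  unfold box. apply NoDup_flat_map; [apply seq_NoDup | |].
  - intros i. apply NoDup_map_NoDup_ForallPairs; [|apply seq_NoDup].
    intros a b _ _ H. injection H; lia.
  - intros i j p Hi Hj. apply in_map_iff in Hi as [a [<- _]].
    apply in_map_iff in Hj as [b [H _]]. injection H; lia.
Qed.

Lemma walk_count_bound (lam : R) (n : nat) : 0 <= lam -> (1 <= n)%nat ->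
  INR (4 ^ (2 * n - 2)) * poisson_exp_moment lam ^ (2 * n - 1)
  <= exp ((4 + 2 * (lam * (exp 1 - 1))) * INR n).
Proof.
  intros Hlam Hn.
  pose proof (poisson_exp_moment_ge1 lam Hlam) as Hm.
  assert (H16 : 4 ^ 2 <= exp 4).
  { assert (E4 : exp 4 = exp 1 ^ 4) by (rewrite <- exp_mult_INR; f_equal; simpl; ring).
    rewrite E4. replace (4 ^ 2) with (2 ^ 4) by ring.
    apply pow_incr. pose proof (exp_ineq1_le 1). lra. }
  rewrite exp_mult_INR, exp_plus, pow_INR, Rpow_mult_distr.
  replace (exp (2 * (lam * (exp 1 - 1)))) with (poisson_exp_moment lam ^ 2)
    by (unfold poisson_exp_moment; simpl; rewrite Rmult_1_r, <- exp_plus; f_equal; ring).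
  replace (2 * n - 2)%nat with (2 * (n - 1))%nat by lia.
  rewrite !pow_mult. simpl (INR 4).
  replace (1 + 1 + 1 + 1) with 4 by ring.
  apply Rmult_le_compat; try (apply pow_le; lra).
  - apply Rle_trans with ((4 ^ 2) ^ n); [apply Rle_pow; [simpl; lra | lia]|].
    apply pow_incr; simpl; lra.
  - rewrite <- !pow_mult. apply Rle_pow; [assumption | lia].
Qed.

Lemma trunc_sum_exp_N_le (lam : R) (M n : nat) : 0 <= lam -> (1 <= n)%nat ->
  trunc_sum lam M (box n) (fun x => exp (INR (Defs.N n x))) (fun _ => 0%nat)
  <= exp ((4 + 2 * (lam * (exp 1 - 1))) * INR n).
Proof.
  intros Hlam Hn.
  eapply Rle_trans; [apply trunc_sum_le; [assumption | intro x; apply exp_N_le_sum_walks, Hn]|].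
  rewrite (trunc_sum_sum_over lam M _ (fun w x => exp (INR (weight x (nodup site_eq_dec w))))).
  eapply Rle_trans; [apply sum_over_le_length with (B := poisson_exp_moment lam ^ (2 * n - 1))|].
  - intros w Hw.
    eapply Rle_trans;
      [apply trunc_sum_exp_weight_le; auto using box_NoDup, NoDup_nodup|].
    rewrite weight_zero, INR_0, exp_0, Rmult_1_r.
    apply Rle_pow; [apply poisson_exp_moment_ge1; assumption|].
    apply Nat.le_trans with (length (nodup site_eq_dec w)); [apply filter_length_le|].
    replace (2 * n - 1)%nat with (length w) by (rewrite (In_walks_length _ _ _ Hw); lia).
    apply NoDup_incl_length; [apply NoDup_nodup | intros p; apply nodup_In].
  - rewrite length_walks. apply walk_count_bound; assumption.
Qed.

Lemma pow_le_pow_add_exp (y c : R) (k : nat) : 0 <= y -> 0 <= c ->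
  y ^ k <= (2 * c) ^ k + 2 ^ k * INR (fact k) * exp (- c) * exp y.
Proof.
  intros Hy Hc.
  assert (Hfact : 0 < INR (fact k)) by apply lt_0_INR, lt_O_fact.
  assert (H2k : 0 < 2 ^ k) by (apply pow_lt; lra).
  assert (Hexp : 0 <= 2 ^ k * INR (fact k) * exp (- c) * exp y)
    by (pose proof (exp_pos (- c)); pose proof (exp_pos y);
        repeat apply Rmult_le_pos; lra).
  destruct (Rle_dec y (2 * c)) as [Hsmall|Hbig].
  - pose proof (pow_incr y (2 * c) k (conj Hy Hsmall)). lra.
  - assert (0 <= (2 * c) ^ k) by (apply pow_le; lra).
    assert (Hhalf : exp (y / 2) <= exp (- c) * exp y).
    { rewrite <- exp_plus. destruct (Req_dec (y / 2) (- c + y)) as [->|]; [lra|].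
      left; apply exp_increasing; lra. }
    pose proof (pow_div_fact_le_exp (y / 2) k ltac:(lra)) as Hterm.
    assert (Hy2 : y ^ k = 2 ^ k * INR (fact k) * ((y / 2) ^ k / INR (fact k))).
    { replace y with (2 * (y / 2)) at 1 by field. rewrite Rpow_mult_distr. field; lra. }
    assert (y ^ k <= 2 ^ k * INR (fact k) * exp (y / 2)).
    { rewrite Hy2. apply Rmult_le_compat_l; [apply Rmult_le_pos|]; lra. }
    assert (2 ^ k * INR (fact k) * exp (y / 2) <= 2 ^ k * INR (fact k) * (exp (- c) * exp y))
      by (apply Rmult_le_compat_l; [apply Rmult_le_pos|]; lra).
    lra.
Qed.

Lemma trunc_moment_le_exp_moment (lam c : R) (n k M : nat) : 0 <= lam -> 0 <= c ->
  trunc_moment lam n k M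
  <= (2 * c) ^ k + 2 ^ k * INR (fact k) * exp (- c)
       * trunc_sum lam M (box n) (fun x => exp (INR (Defs.N n x))) (fun _ => 0%nat).
Proof.
  intros Hlam Hc. unfold trunc_moment.
  eapply Rle_trans.
  { apply (trunc_sum_le lam M Hlam (box n) _
      (fun x => (2 * c) ^ k * 1 + 2 ^ k * INR (fact k) * exp (- c) * exp (INR (Defs.N n x)))).
    intro x. rewrite Rmult_1_r. apply pow_le_pow_add_exp; [apply pos_INR | assumption]. }
  rewrite trunc_sum_plus, !trunc_sum_scal.
  pose proof (trunc_sum_one_le lam M Hlam (box n) (fun _ => 0%nat)).
  assert (0 <= (2 * c) ^ k) by (apply pow_le; lra).
  apply Rplus_le_compat_r. rewrite <- (Rmult_1_r ((2 * c) ^ k)) at 2.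
  apply Rmult_le_compat_l; assumption.
Qed.

Theorem corollary3p2 (lam : R) (hlam : 0 < lam) (k : nat) :
  exists C : R, forall n : nat, (1 <= n)%nat ->
    forall M : nat, trunc_moment lam n k M <= C * INR n ^ k.
Proof.
  set (a := 4 + 2 * (lam * (exp 1 - 1))).
  assert (Ha : 0 <= a) by (unfold a; pose proof (exp_ineq1_le 1); nra).
  set (K := 2 ^ k * INR (fact k)).
  assert (HK : 0 <= K) by (apply Rmult_le_pos; [apply pow_le; lra | apply pos_INR]).
  exists ((2 * a) ^ k + K). intros n Hn M.
  assert (Hnk : 1 <= INR n ^ k) by apply pow_R1_Rle, (le_INR 1), Hn.
  assert (Han : 0 <= a * INR n) by (apply Rmult_le_pos; [assumption | apply pos_INR]).
  pose proof (trunc_moment_le_exp_moment lam (a * INR n) n k M ltac:(lra) Han) as Hmoment.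
  pose proof (trunc_sum_exp_N_le lam M n ltac:(lra) Hn) as HexpN. fold a in HexpN.
  assert (Hexp : exp (- (a * INR n)) * exp (a * INR n) = 1)
    by (rewrite <- exp_plus, Rplus_opp_l; apply exp_0).
  assert (K * exp (- (a * INR n)) * trunc_sum lam M (box n)
            (fun x => exp (INR (Defs.N n x))) (fun _ => 0%nat) <= K).
  { rewrite <- (Rmult_1_r K) at 2. rewrite <- Hexp, <- Rmult_assoc.
    apply Rmult_le_compat_l; [|assumption].
    apply Rmult_le_pos; [assumption | left; apply exp_pos]. }
  rewrite <- Rmult_assoc, Rpow_mult_distr in Hmoment.
  assert (K <= K * INR n ^ k) by (rewrite <- (Rmult_1_r K) at 1; apply Rmult_le_compat_l; lra).
  fold K in Hmoment. lra.
Qed.
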